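(* Let $q\ge 2$, $n\ge 1$, $\delta\ge 2$, and let $r$ be a prime power with $r>q$. Then there exists a subset $\mathcal A\subseteq J_q(n)$ with $$|\mathcal A|\ge\frac{\binom{n+q-1}{n}}{r^{\delta-2}(r-1)}$$ such that $d_L(\mathbf u,\mathbf v)\ge 2\delta$ for all distinct $\mathbf u,\mathbf v\in\mathcal A$.
   Context: $J_q(n)=\{(a_1,\dots,a_q)\in\mathbb Z_{\ge0}^q:\ \sum_{i=1}^q a_i=n\}$. The $L^1$-distance is $d_L(\mathbf u,\mathbf v)=\sum_{i=1}^q|u_i-v_i|$. *)

From mathcomp Require Import all_boot all_order all_algebra.
Set Implicit Arguments. Unset Strict Implicit. Unset Printing Implicit Defensive.

(* A vector (a_1,...,a_q) of nonnegative integers with entries <= n is encoded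
   as a finite function 'I_q -> 'I_n.+1; every element of J_q(n) has entries
   <= n, so J_q(n) is represented exactly. *)
Definition vec (q n : nat) := {ffun 'I_q -> 'I_n.+1}.

Definition Jq (q n : nat) : {set vec q n} :=
  [set a : vec q n | \sum_(i < q) (a i : nat) == n].

(* L^1 distance: |u_i - v_i| on nat is (u_i - v_i) + (v_i - u_i) (truncated). *)
Definition dL (q n : nat) (u v : vec q n) : nat :=
  \sum_(i < q) (((u i : nat) - v i) + ((v i : nat) - u i)).

Definition prime_power (r : nat) : Prop :=
  exists p k : nat, prime p /\ 0 < k /\ r = p ^ k.

From mathcomp Require Import all_boot all_order all_algebra.
From mathcomp Require Import finfield zify.
Import Order.TTheory GRing.Theory Num.Theory.

Set Implicit Arguments.
Unset Strict Implicit.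
Unset Printing Implicit Defensive.

(* Fix distinct nonzero a_1, ..., a_q in GF(r) and send u in J_q(n) to the
   monic polynomial P_u = prod_i (X - a_i)^(u_i) of degree n.  Its key is the
   list of coefficients of X^(n-1), ..., X^(n-delta+2) together with the
   (nonzero) constant term, so there are r^(delta-2) (r-1) keys and some
   fibre has the required size.  If u <> v share a key, write
   P_u = P_c P_w and P_v = P_c P_w' with c = min(u, v); then d_L(u, v) = 2s
   with s = deg P_w = deg P_w'.  The shared top coefficients give
   deg (P_u - P_v) <= n - delta + 1, while P_u - P_v = P_c (P_w - P_w') with
   deg P_c = n - s.  Hence s < delta forces P_w - P_w' to be a constant, which
   the shared constant term makes zero; unique factorisation then yields
   w = w', i.e. u = v. *)

Lemma size_sub_monic_le (R : nzRingType) (P Q : {poly R}) n m :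
    P \is monic -> Q \is monic -> size P = n.+1 -> size Q = n.+1 ->
    (forall j, m <= j < n -> (P`_j = Q`_j)%R) ->
  size (P - Q)%R <= m.
Proof.
move=> mP mQ sP sQ eqPQ; apply/leq_sizeP => j le_mj; rewrite coefB.
have [lt_nj|] := ltnP n j; first by rewrite !nth_default ?sP ?sQ ?subrr.
rewrite leq_eqVlt => /orP[/eqP ->|lt_jn]; last by rewrite eqPQ ?le_mj ?subrr.
have := monicP mP; have := monicP mQ.
by rewrite !lead_coefE sP sQ => -> ->; rewrite subrr.
Qed.

Lemma monicM_small_eq0 (R : idomainType) (C D : {poly R}) :
  C \is monic -> (C`_0 != 0)%R -> size (C * D)%R <= size C ->
  ((C * D)`_0 = 0)%R -> D = 0%R.
Proof.
move=> mC C0 sCD CD0; have [-> // | D0] := eqVneq D 0%R.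
have sD : size D <= 1.
  have : 0 < size C by rewrite size_poly_gt0 monic_neq0.
  by move: sCD; rewrite size_monicM //; lia.
move: CD0; rewrite [D]size1_polyC // coefMC => /eqP.
by rewrite mulf_eq0 (negbTE C0) /= => /eqP ->.
Qed.

Lemma pigeonhole_fibre (T K : finType) (A : {set T}) (S : {set K}) (f : T -> K) :
    (forall x, x \in A -> f x \in S) -> 0 < #|S| ->
  exists2 k, k \in S & #|A| <= #|S| * #|[set x in A | f x == k]|.
Proof.
move=> fAS S_gt0; pose fibre k := #|[set x in A | f x == k]|.
have [k Sk max_k] := eq_bigmax_cond fibre S_gt0; exists k => //; rewrite -/(fibre k).
have -> : #|A| = \sum_(k in S) fibre k.
  rewrite -sum1_card (partition_big f (mem S)) //=.
  by apply: eq_bigr => k' _; rewrite sum1dep_card; apply: eq_card => x; rewrite !inE.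
by rewrite -max_k -sum_nat_const; apply: leq_sum => k' Sk'; apply: leq_bigmax_cond.
Qed.

Section ExponentPolynomial.

Variables (F : fieldType) (q : nat) (a : 'I_q -> F).
Hypotheses (a_inj : injective a) (a_neq0 : forall i, a i != 0%R).

Local Open Scope ring_scope.

Definition expPoly (e : 'I_q -> nat) : {poly F} := \prod_(i < q) ('X - (a i)%:P) ^+ e i.

Lemma expPoly_monic_size e :
  expPoly e \is monic /\ size (expPoly e) = (\sum_(i < q) e i)%N.+1.
Proof.
rewrite /expPoly; apply: (big_rec2 (fun p s => p \is monic /\ size p = s.+1)).
  by rewrite monic1 size_poly1.
move=> i p s _ [mp sp].
have mXi : ('X - (a i)%:P) ^+ e i \is monic by rewrite monic_exp ?monicXsubC.
by rewrite rpredM // size_monicM ?monic_neq0 // size_exp_XsubC sp addSn addnS.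
Qed.

Lemma expPoly_monic e : expPoly e \is monic.
Proof. by have [] := expPoly_monic_size e. Qed.

Lemma size_expPoly e : size (expPoly e) = (\sum_(i < q) e i)%N.+1.
Proof. by have [] := expPoly_monic_size e. Qed.

Lemma expPolyD e1 e2 : expPoly (fun i => e1 i + e2 i)%N = expPoly e1 * expPoly e2.
Proof. by rewrite /expPoly -big_split; apply: eq_bigr => i _; rewrite exprD. Qed.

Lemma coef0_expPoly_neq0 e : (expPoly e)`_0 != 0.
Proof.
rewrite -horner_coef0 horner_prod; apply/prodf_neq0 => i _.
by rewrite horner_exp hornerXsubC expf_neq0 // sub0r oppr_eq0.
Qed.

Lemma mup_expPoly e j : mup (a j) (expPoly e) = e j.
Proof.
have mup_prod (s : seq 'I_q) :
    mup (a j) (\prod_(i <- s) ('X - (a i)%:P) ^+ e i) =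
    (\sum_(i <- s) mup (a j) (('X - (a i)%:P) ^+ e i))%N.
  elim: s => [|i s IHs]; first by rewrite !big_nil mupNroot ?root1.
  rewrite !big_cons mupM ?IHs ?expf_neq0 ?polyXsubC_eq0 //.
  by apply/monic_neq0/monic_prod => k _; rewrite monic_exp ?monicXsubC.
rewrite /expPoly mup_prod -big_enum /=.
under eq_bigr do rewrite mup_XsubCX (inj_eq a_inj).
by rewrite big_enum -big_mkcond big_pred1_eq.
Qed.

Lemma expPoly_inj e1 e2 : expPoly e1 = expPoly e2 -> forall i, e1 i = e2 i.
Proof. by move=> E i; rewrite -!mup_expPoly E. Qed.

Lemma expPoly_top_coefs_inj e1 e2 n k :
    (\sum_(i < q) e1 i)%N = n -> (\sum_(i < q) e2 i)%N = n ->
    (\sum_(i < q) (e1 i - minn (e1 i) (e2 i)) <= k.+1)%N ->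
    (forall j, (n - k <= j < n)%N -> (expPoly e1)`_j = (expPoly e2)`_j) ->
    (expPoly e1)`_0 = (expPoly e2)`_0 ->
  forall i, e1 i = e2 i.
Proof.
move=> sum1 sum2 le_sk top_eq eq0.
pose c i := minn (e1 i) (e2 i); pose w1 i := (e1 i - c i)%N; pose w2 i := (e2 i - c i)%N.
have E1 : expPoly e1 = expPoly c * expPoly w1.
  by rewrite -expPolyD; apply: eq_bigr => i _; rewrite /w1 /c; congr (_ ^+ _); lia.
have E2 : expPoly e2 = expPoly c * expPoly w2.
  by rewrite -expPolyD; apply: eq_bigr => i _; rewrite /w2 /c; congr (_ ^+ _); lia.
have sum_c : (\sum_(i < q) c i + \sum_(i < q) (e1 i - minn (e1 i) (e2 i)) = n)%N.
  by rewrite -big_split -sum1; apply: eq_bigr => i _; rewrite /c /=; lia.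
have size_sub : (size (expPoly e1 - expPoly e2)%R <= n - k)%N.
  by apply: size_sub_monic_le top_eq; rewrite ?expPoly_monic ?size_expPoly ?sum1 ?sum2.
have w12 : expPoly w1 - expPoly w2 = 0.
  apply: (@monicM_small_eq0 _ (expPoly c)).
  - exact: expPoly_monic.
  - exact: coef0_expPoly_neq0.
  - rewrite mulrBr -E1 -E2 size_expPoly; apply: leq_trans size_sub _; lia.
  - by rewrite mulrBr -E1 -E2 coefB eq0 subrr.
move=> i; have := @expPoly_inj w1 w2 (subr0_eq w12) i; rewrite /w1 /w2 /c; lia.
Qed.

End ExponentPolynomial.

Lemma dL_sub_min q n (u v : vec q n) :
    (\sum_(i < q) (u i : nat))%N = (\sum_(i < q) (v i : nat))%N ->
  dL u v = (2 * \sum_(i < q) (u i - minn (u i) (v i)))%N.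
Proof.
move=> sum_uv; pose m i := minn (u i) (v i).
have split_sum (x : vec q n) : (forall i, m i <= x i) ->
    (\sum_(i < q) (x i : nat) = \sum_(i < q) m i + \sum_(i < q) (x i - m i))%N.
  by move=> le_m; rewrite -big_split; apply: eq_bigr => i _ /=; rewrite subnKC.
have sum_w : (\sum_(i < q) (v i - m i) = \sum_(i < q) (u i - m i))%N.
  have le_mu i : m i <= u i by rewrite geq_minl.
  have le_mv i : m i <= v i by rewrite geq_minr.
  by apply/eqP; rewrite -(eqn_add2l (\sum_(i < q) m i)) -!split_sum ?sum_uv.
rewrite mul2n -addnn -{2}sum_w /dL -big_split; apply: eq_bigr => i _ /=; rewrite /m; lia.
Qed.

Section PolynomialCode.

Variables (F : fieldType) (q n k : nat) (a : 'I_q -> F).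
Hypotheses (a_inj : injective a) (a_neq0 : forall i, a i != 0%R).

Definition code_key (u : vec q n) : {ffun 'I_k -> F} * F :=
  let P := expPoly a (fun i => u i) in ([ffun j : 'I_k => (P`_(n.-1 - j))%R], (P`_0)%R).

Lemma code_key_dist (u v : vec q n) : u \in Jq q n -> v \in Jq q n ->
  code_key u = code_key v -> u != v -> 2 * k.+2 <= dL u v.
Proof.
rewrite !inE => /eqP sum_u /eqP sum_v [top_eq eq0] neq_uv.
rewrite leqNgt; apply: contra neq_uv => lt_dL; apply/eqP/ffunP => i; apply: val_inj.
apply: (expPoly_top_coefs_inj a_inj a_neq0 (k := k) sum_u sum_v _ _ eq0).
  by move: lt_dL; rewrite dL_sub_min ?sum_u ?sum_v //; lia.
move=> j /andP[le_j lt_jn]; have lt_jk : n.-1 - j < k by lia.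
have := congr1 (fun f : {ffun 'I_k -> F} => f (Ordinal lt_jk)) top_eq.
by rewrite !ffunE /= (_ : n.-1 - (n.-1 - j) = j)%N //; lia.
Qed.

End PolynomialCode.

Lemma card_Jq q n : 0 < q -> #|Jq q n| = 'C(n + q - 1, n).
Proof.
case: q => // m _; rewrite (_ : n + m.+1 - 1 = m + n)%N; last by lia.
rewrite -bin_sub ?leq_addl // addnK -card_ord_partitions.
pose g (t : m.+1.-tuple 'I_n.+1) : vec m.+1 n := [ffun i => tnth t i].
have g_inj : injective g.
  move=> t1 t2 E; apply: eq_from_tnth => i.
  by have := congr1 (fun f : vec m.+1 n => f i) E; rewrite !ffunE.
rewrite -(card_imset _ g_inj); apply: eq_card => u; rewrite !inE.
apply/idP/imsetP => [sum_u | [t]].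
  exists [tuple u i | i < m.+1]; last by apply/ffunP => i; rewrite ffunE tnth_mktuple.
  by rewrite inE big_tuple; under eq_bigr do rewrite tnth_mktuple.
by rewrite inE big_tuple => sum_t ->; under eq_bigr do rewrite ffunE.
Qed.

Lemma nonzero_points (F : finFieldType) q : q < #|F| ->
  exists2 a : 'I_q -> F, injective a & forall i, a i != 0%R.
Proof.
move=> lt_qF.
have le_q : q <= #|[set~ (0 : F)%R]| by rewrite cardsC1 -ltnS (ltn_predK lt_qF).
exists (fun i => enum_val (widen_ord le_q i)).
  by move=> i j /enum_val_inj /(congr1 val) /= /val_inj.
by move=> i; have := enum_valP (widen_ord le_q i); rewrite !inE.
Qed.

Theorem lemma4p3 (q n delta r : nat) :
  2 <= q -> 1 <= n -> 2 <= delta -> prime_power r -> q < r ->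
  exists A : {set vec q n},
    A \subset Jq q n /\
    (('C(n + q - 1, n))%:R / ((r ^ (delta - 2) * (r - 1))%:R) <= (#|A|%:R : rat))%R /\
    (forall u v, u \in A -> v \in A -> u != v -> 2 * delta <= dL u v).
Proof.
move=> q2 _ delta2 [p [e [p_pr [e_gt0 ->]]]] lt_qr.
have [F _ card_F] := pPrimePowerField p_pr e_gt0.
have [|a a_inj a_neq0] := @nonzero_points F q; first by rewrite card_F.
pose keys := setX [set: {ffun 'I_(delta - 2) -> F}] [set~ (0 : F)%R].
have card_keys : #|keys| = ((p ^ e) ^ (delta - 2) * (p ^ e - 1))%N.
  by rewrite cardsX cardsT card_ffun card_ord cardsC1 card_F subn1.
have r_gt1 : 1 < p ^ e by apply: leq_ltn_trans lt_qr; apply: ltnW.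
have keys_gt0 : 0 < #|keys| by rewrite card_keys muln_gt0 expn_gt0 subn_gt0 r_gt1 ltnW.
have key_in (u : vec q n) : code_key (delta - 2) a u \in keys.
  by rewrite !inE /= coef0_expPoly_neq0.
have [key _ le_J] := pigeonhole_fibre (A := Jq q n) (fun u _ => key_in u) keys_gt0.
exists [set u in Jq q n | code_key (delta - 2) a u == key]; split; last split.
- by apply/subsetP => u; rewrite inE => /andP[].
- rewrite ler_pdivrMr -?card_keys ?ltr0n // -card_Jq ?(ltn_trans _ q2) //.
  by rewrite -natrM ler_nat mulnC.
move=> u v /setIdP[Ju /eqP key_u] /setIdP[Jv /eqP key_v] neq_uv.
have := code_key_dist a_inj a_neq0 Ju Jv (etrans key_u (esym key_v)) neq_uv.
by rewrite -[(delta - 2).+2]addn2 subnK.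
Qed.
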